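(* Let $\mathcal{M}=(S,E,T)$ be a trivially parametric Markov chain satisfying the standing assumptions below. Then there exists a finest valuation for $\mathcal{M}$, i.e. a graph-preserving valuation $\mathsf{val}$ such that for all $u,v\in S$, $P_{\mathsf{val}}(u)=P_{\mathsf{val}}(v)$ if and only if $u\sim v$.
   Context: A trivially parametric Markov chain $\mathcal{M}=(S,E,T)$ consists of a finite set of states $S$, targets $T=\{\mathit{fin},\mathit{fail}\}$ with no outgoing edges, and edges $E\subseteq(S\setminus T)\times S$. A graph-preserving valuation assigns to each non-target $s$ a full-support probability distribution on its successor set $sE$; $P_{\mathsf{val}}(s)$ is the probability of reaching $\mathit{fin}$ from $s$ in the resulting Markov chain. $u\sim v$ iff $P_{\mathsf{val}}(u)=P_{\mathsf{val}}(v)$ for every graph-preserving valuation. Standing assumptions: the equivalence classes of $\mathit{fin}$ and $\mathit{fail}$ are $\{\mathit{fin}\}$ and $\{\mathit{fail}\}$; no state has a self-loop; every non-target state has exactly two successors. *)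

From HB Require Import structures.
From mathcomp Require Import all_boot all_order all_algebra.
From mathcomp Require Import all_classical all_reals all_analysis.
Set Implicit Arguments. Unset Strict Implicit. Unset Printing Implicit Defensive.
Import Order.TTheory GRing.Theory Num.Theory.
Import numFieldNormedType.Exports.
Local Open Scope ring_scope.

Section TPMC.
Variables (R : realType) (S : finType) (E : rel S) (sfin sfail : S).

Definition is_target (s : S) : bool := (s == sfin) || (s == sfail).

Definition graph_preserving (val : S -> S -> R) : Prop :=
  forall s, ~~ is_target s ->
    [/\ forall t, E s t -> 0 < val s t,
        forall t, ~~ E s t -> val s t = 0
      & \sum_(t : S) val s t = 1].

Fixpoint reach_within (val : S -> S -> R) (n : nat) (s : S) : R :=
  match n with
  | 0 => if s == sfin then 1 else 0
  | n'.+1 => if s == sfin then 1 else if s == sfail then 0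
             else \sum_(t : S) val s t * reach_within val n' t
  end.

Definition Pval (val : S -> S -> R) (s : S) : R :=
  limn (fun n => reach_within val n s).

Definition mc_equiv (u v : S) : Prop :=
  forall val, graph_preserving val -> Pval val u = Pval val v.

End TPMC.

From HB Require Import structures.
From mathcomp Require Import all_boot all_order all_algebra.
From mathcomp Require Import all_classical all_reals all_analysis.
From mathcomp Require Import ring lra.
Import Order.TTheory GRing.Theory Num.Theory.
Import numFieldNormedType.Exports.
Set Implicit Arguments. Unset Strict Implicit. Unset Printing Implicit Defensive.
Local Open Scope ring_scope.

(* P_val is the solution of P(fin) = 1, P(fail) = 0 and P(s) = sum_t val(s,t) P(t)
   at non-targets.  A state that cannot reach fin would be equivalent to fail,
   so every state other than fail reaches fin; the maximum principle for such
   harmonic functions then shows that the homogeneous system has only the zero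
   solution, i.e. the system matrix is invertible.  Along the segment
   t |-> val0 + t (val1 - val0) the system depends affinely on t, so by Cramer's
   rule P_val(u) - P_val(v) is a polynomial in t divided by a polynomial that does
   not vanish on [0, 1].  If finitely many pairs are each separated by val0 or by
   val1, the product of these numerators is a nonzero polynomial, so some t in
   [0, 1] separates all of them; induction over the finitely many inequivalent
   pairs yields the finest valuation. *)

Section Reachability.
Variables (R : realType) (S : finType) (E : rel S) (sfin sfail : S).
Hypothesis fin_neq_fail : sfin != sfail.
Local Notation tgt := (is_target sfin sfail).

Definition harmonic (val : S -> S -> R) (d : S -> R) : Prop :=
  forall s, ~~ tgt s -> d s = \sum_t val s t * d t.

Variable val : S -> S -> R.
Hypothesis val_gp : graph_preserving E sfin sfail val.
Local Notation reach := (reach_within sfin sfail val).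
Local Notation P := (Pval sfin sfail val).

Lemma val_ge0 s t : ~~ tgt s -> 0 <= val s t.
Proof. by move=> /val_gp[pos zero _]; case: (boolP (E s t)) => [/pos/ltW | /zero ->]. Qed.

Lemma reach_within_target n s : tgt s -> reach n s = (s == sfin)%:R.
Proof.
case: n => [|n] /=; first by case: (s == sfin).
by case/orP=> /eqP->; rewrite ?eqxx // eq_sym (negbTE fin_neq_fail).
Qed.

Lemma reach_within_nontarget n s :
  ~~ tgt s -> reach n.+1 s = \sum_t val s t * reach n t.
Proof. by rewrite /is_target negb_or => /andP[/negbTE /= -> /negbTE ->]. Qed.

Lemma reach_within_ge0 n s : 0 <= reach n s.
Proof.
elim: n s => [|n IH] s; first by rewrite /=; case: ifP.
have [ts | nt] := boolP (tgt s); first by rewrite reach_within_target ?ler0n.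
rewrite reach_within_nontarget //; apply: sumr_ge0 => t _.
by rewrite mulr_ge0 ?val_ge0.
Qed.

Lemma reach_within_le1 n s : reach n s <= 1.
Proof.
elim: n s => [|n IH] s; first by rewrite /=; case: ifP.
have [ts | nt] := boolP (tgt s); first by rewrite reach_within_target ?lern1 ?leq_b1.
have [_ _ <-] := val_gp nt; rewrite reach_within_nontarget //.
by apply: ler_sum => t _; rewrite ler_piMr ?val_ge0.
Qed.

Lemma reach_within_nondecreasing s : nondecreasing_seq (reach^~ s).
Proof.
apply/nondecreasing_seqP => n; elim: n s => [|n IH] s.
  have [ts | nt] := boolP (tgt s); first by rewrite !reach_within_target.
  have nfin : s != sfin by apply: contraNN nt => /eqP->; rewrite /is_target eqxx.
  rewrite reach_within_nontarget // [reach 0 s]/= (negbTE nfin).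
  by apply: sumr_ge0 => t _; rewrite mulr_ge0 ?val_ge0 ?reach_within_ge0.
have [ts | nt] := boolP (tgt s); first by rewrite !reach_within_target.
rewrite !reach_within_nontarget //; apply: ler_sum => t _.
by rewrite ler_wpM2l ?val_ge0.
Qed.

Lemma reach_within_cvg s : (reach^~ s @ \oo --> P s)%classic.
Proof.
have cvg_sup : (reach^~ s @ \oo --> sup (range (reach^~ s)))%classic.
  apply: nondecreasing_cvgn; first exact: reach_within_nondecreasing.
  by exists 1 => _ [n _ <-]; exact: reach_within_le1.
by rewrite /Pval (cvg_lim _ cvg_sup).
Qed.

Lemma Pval_target s : tgt s -> P s = (s == sfin)%:R.
Proof.
move=> ts; rewrite /Pval (_ : reach^~ s = fun=> (s == sfin)%:R) ?lim_cst //.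
by apply/funext => n; rewrite reach_within_target.
Qed.

Lemma Pval_harmonic : harmonic val P.
Proof.
move=> s nt.
have cvg_step : (reach^~ s @ \oo --> \sum_t val s t * P t)%classic.
  have shift : (fun n => reach n.+1 s) = fun n => \sum_t val s t * reach n t.
    by apply/funext => n; exact: reach_within_nontarget.
  rewrite -(cvg_shiftS (reach^~ s)) shift.
  apply: (@cvg_big _ _ +%R 0 xpredT add_continuous) => t _.
  by apply: cvgMl_tmp; exact: reach_within_cvg.
by rewrite {1}/Pval (cvg_lim _ cvg_step).
Qed.

Lemma Pval_unreachable s : ~~ connect E s sfin -> P s = 0.
Proof.
move=> nreach; rewrite /Pval (_ : reach^~ s = fun=> 0) ?lim_cst //.
have nfin x : ~~ connect E x sfin -> (x == sfin) = false.
  by move=> nx; apply: contraNF nx => /eqP->; exact: connect0.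
apply/funext => n; elim: n s nreach => [|n IH] s nreach; first by rewrite /= nfin.
have [ts | nt] := boolP (tgt s); first by rewrite reach_within_target // nfin.
rewrite reach_within_nontarget //; apply: big1 => t _.
have [est | nest] := boolP (E s t); last by have [_ -> // _] := val_gp nt; rewrite mul0r.
by rewrite IH ?mulr0 //; apply: contraNN nreach; exact: connect_trans (connect1 est).
Qed.

End Reachability.

Section MaximumPrinciple.
Variables (R : realType) (S : finType) (E : rel S) (sfin sfail : S).
Variable val : S -> S -> R.
Hypothesis val_gp : graph_preserving E sfin sfail val.
Hypothesis reach_fin : forall s, s != sfail -> connect E s sfin.
Local Notation tgt := (is_target sfin sfail).

Lemma harmonic_succ_of_max d x y : harmonic sfin sfail val d ->
  (forall z, d z <= d x) -> ~~ tgt x -> E x y -> d y = d x.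
Proof.
move=> hd dmax nt exy; have [pos _ sum1] := val_gp nt.
have gap_eq0 : \sum_t val x t * (d x - d t) = 0.
  under eq_bigr do rewrite mulrBr.
  by rewrite sumrB -mulr_suml sum1 mul1r -hd // subrr.
have gap_ge0 t : true -> 0 <= val x t * (d x - d t).
  by rewrite mulr_ge0 ?(val_ge0 val_gp) ?subr_ge0.
have /eqP := psumr_eq0P gap_ge0 gap_eq0 (i := y) isT.
by rewrite mulf_eq0 (gt_eqF (pos y exy)) /= subr_eq0 eq_sym => /eqP.
Qed.

Lemma harmonic_le_max d : harmonic sfin sfail val d ->
  forall s, d s <= Num.max (d sfin) (d sfail).
Proof.
move=> hd s; have [s0 _ dmax] := @arg_maxP _ R S sfin xpredT d isT.
apply: le_trans (dmax s isT) _; rewrite leNgt; apply/negP => s0_gt_max.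
have nt x : d x = d s0 -> ~~ tgt x.
  by move=> dx; apply: contraL s0_gt_max => /orP[]/eqP ex; rewrite -dx ex -leNgt le_max lexx ?orbT.
have along q x : d x = d s0 -> path E x q -> d (last x q) = d s0.
  elim: q x => [|y q IH] x //= dx /andP[exy pq]; apply: IH pq.
  have xmax z : d z <= d x by rewrite dx; exact: dmax.
  by rewrite (harmonic_succ_of_max hd xmax (nt x dx) exy).
have s0_fail : s0 != sfail.
  by apply: contraTneq (nt s0 erefl) => ->; rewrite /is_target eqxx orbT.
have /connectP[p pth fin_last] := reach_fin s0_fail.
have := along p s0 erefl pth; rewrite -fin_last => dfin.
by move: s0_gt_max; rewrite -dfin ltNge le_max lexx.
Qed.

Lemma harmonic_eq0 d : harmonic sfin sfail val d ->
  d sfin = 0 -> d sfail = 0 -> forall s, d s = 0.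
Proof.
move=> hd d_fin d_fail s; apply/eqP; rewrite eq_le.
have := harmonic_le_max hd s; rewrite d_fin d_fail maxxx => -> /=.
have hnd : harmonic sfin sfail val (fun x => - d x).
  by move=> x nt; rewrite hd // -sumrN; apply: eq_bigr => t _; rewrite mulrN.
by have := harmonic_le_max hnd s; rewrite d_fin d_fail oppr0 maxxx oppr_le0.
Qed.

End MaximumPrinciple.

Lemma det_neq0_of_ker (K : fieldType) n (M : 'M[K]_n) :
  (forall x : 'cV_n, M *m x = 0 -> x = 0) -> \det M != 0.
Proof.
move=> ker; rewrite -det_tr; apply/negP => /det0P[v /eqP v_neq0 vM]; apply: v_neq0.
by rewrite -[v]trmxK (ker v^T) ?trmx0 // -[M]trmxK -trmx_mul vM trmx0.
Qed.

Lemma affine_system_cramer (K : fieldType) n (A B : 'M[K]_n) (b : 'cV[K]_n) :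
  exists (d : {poly K}) (q : 'I_n -> {poly K}), forall t,
    d.[t] = \det (A + t *: B) /\
    forall x, (A + t *: B) *m x = b -> forall i, x i 0 * d.[t] = (q i).[t].
Proof.
pose P : 'M[{poly K}]_n := \matrix_(i, j) ((A i j)%:P + 'X * (B i j)%:P).
have evalP t : map_mx (horner_eval t) P = A + t *: B.
  by apply/matrixP => i j; rewrite !mxE /horner_eval hornerD hornerM hornerX !hornerC.
have eval_b t : map_mx (horner_eval t) (map_mx polyC b) = b.
  by apply/matrixP => i j; rewrite !mxE /horner_eval hornerC.
exists (\det P), (fun i => (\adj P *m map_mx polyC b) i 0) => t.
split=> [|x hx i]; first by rewrite -evalP det_map_mx.
have cramer : \det (A + t *: B) *: x = \adj (A + t *: B) *m b.
  by rewrite -hx mulmxA mul_adj_mx mul_scalar_mx.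
have /matrixP/(_ i 0) := cramer.
rewrite -evalP -map_mx_adj det_map_mx -[in X in _ = X -> _](eval_b t) -map_mxM.
by rewrite !mxE mulrC.
Qed.

Lemma exists_nonroot_unit_interval (K : numFieldType) (p : {poly K}) :
  p != 0 -> exists2 t : K, 0 <= t <= 1 & ~~ root p t.
Proof.
move=> p_neq0; pose ts := [seq (k.+1%:R : K)^-1 | k <- iota 0 (size p)].
have ts_uniq : uniq ts.
  rewrite map_inj_uniq ?iota_uniq // => a b /invr_inj /eqP.
  by rewrite eqr_nat => /eqP [].
have /allPn[_ /mapP[k _ ->] nroot] : ~~ all (root p) ts.
  by apply/negP => /(max_poly_roots p_neq0)/(_ ts_uniq); rewrite size_map size_iota ltnn.
by exists (k.+1%:R)^-1; rewrite // invr_ge0 ler0n invf_le1 ?ltr0n // ler1n.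
Qed.

Section LinearSystem.
Variables (R : realType) (S : finType) (E : rel S) (sfin sfail : S).
Hypothesis fin_neq_fail : sfin != sfail.
Hypothesis reach_fin : forall s, s != sfail -> connect E s sfin.
Local Notation tgt := (is_target sfin sfail).
Local Notation gp := (graph_preserving E sfin sfail).

Definition trans_mx (val : S -> S -> R) : 'M[R]_#|S| :=
  \matrix_(i, j) if tgt (enum_val i) then 0 else val (enum_val i) (enum_val j).

Definition fin_vec : 'cV[R]_#|S| := \col_i (enum_val i == sfin)%:R.

Lemma one_sub_trans_mx_mulE val (x : 'cV[R]_#|S|) i :
  ((1%:M - trans_mx val) *m x) i 0 =
  x i 0 - if tgt (enum_val i) then 0 else \sum_t val (enum_val i) t * x (enum_rank t) 0.
Proof.
rewrite mulmxBl mul1mx !mxE; congr (_ - _); case: ifP => ts.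
  by apply: big1 => j _; rewrite mxE ts mul0r.
rewrite (big_enum_val (fun t => val (enum_val i) t * x (enum_rank t) 0)).
by apply: eq_bigr => j _; rewrite mxE ts enum_valK.
Qed.

Lemma Pval_solves_trans_system val : gp val ->
  (1%:M - trans_mx val) *m (\col_i Pval sfin sfail val (enum_val i)) = fin_vec.
Proof.
move=> val_gp; apply/matrixP => i j; rewrite ord1 one_sub_trans_mx_mulE !mxE.
case: ifPn => [ts | nt]; first by rewrite subr0 Pval_target.
under eq_bigr do rewrite mxE enum_rankK.
rewrite -(Pval_harmonic fin_neq_fail val_gp) // subrr.
by move: nt; rewrite /is_target negb_or => /andP[/negbTE-> _].
Qed.

Lemma one_sub_trans_mx_ker0 val (x : 'cV[R]_#|S|) : gp val ->
  (1%:M - trans_mx val) *m x = 0 -> x = 0.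
Proof.
move=> val_gp /matrixP hx; pose d s := x (enum_rank s) 0.
have x_eq i : x i 0 = if tgt (enum_val i) then 0 else \sum_t val (enum_val i) t * d t.
  by apply/eqP; rewrite -subr_eq0 -one_sub_trans_mx_mulE hx mxE.
have d_eq0 : forall s, d s = 0.
  apply: (harmonic_eq0 val_gp reach_fin) => [s nt||];
    by rewrite /d x_eq enum_rankK ?(negbTE nt) // /is_target eqxx ?orbT.
by apply/matrixP => i j; rewrite ord1 mxE -[i]enum_valK; exact: d_eq0.
Qed.

Definition segment_val (vl0 vl1 : S -> S -> R) (t : R) : S -> S -> R :=
  fun s s' => vl0 s s' + t * (vl1 s s' - vl0 s s').

Lemma segment_val0 vl0 vl1 : segment_val vl0 vl1 0 = vl0.
Proof. by apply/funext => s; apply/funext => s'; rewrite /segment_val mul0r addr0. Qed.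

Lemma segment_val1 vl0 vl1 : segment_val vl0 vl1 1 = vl1.
Proof. by apply/funext => s; apply/funext => s'; rewrite /segment_val mul1r addrC subrK. Qed.

Lemma graph_preserving_segment vl0 vl1 t : gp vl0 -> gp vl1 ->
  0 <= t <= 1 -> gp (segment_val vl0 vl1 t).
Proof.
move=> gp0 gp1 /andP[t_ge0 t_le1] s nt.
have [pos0 zero0 sum0] := gp0 s nt; have [pos1 zero1 sum1] := gp1 s nt.
split=> [s' es' | s' nes' |].
- have := pos0 s' es'; have := pos1 s' es'; rewrite /segment_val; nra.
- by rewrite /segment_val zero0 ?zero1 // subrr mulr0 addr0.
- by rewrite /segment_val big_split /= -mulr_sumr sumrB sum0 sum1 subrr mulr0 addr0.
Qed.

Lemma trans_mx_segment vl0 vl1 t :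
  1%:M - trans_mx (segment_val vl0 vl1 t) =
  (1%:M - trans_mx vl0) + t *: (trans_mx vl0 - trans_mx vl1).
Proof. by apply/matrixP => i j; rewrite !mxE /segment_val; case: ifP => _; ring. Qed.

Lemma Pval_segment_rational vl0 vl1 :
  exists (d : {poly R}) (q : S -> {poly R}), forall t, gp (segment_val vl0 vl1 t) ->
    d.[t] != 0 /\ forall s, Pval sfin sfail (segment_val vl0 vl1 t) s * d.[t] = (q s).[t].
Proof.
have [d [q cramer]] :=
  affine_system_cramer (1%:M - trans_mx vl0) (trans_mx vl0 - trans_mx vl1) fin_vec.
exists d, (fun s => q (enum_rank s)) => t seg_gp; have [d_det sol] := cramer t.
rewrite -trans_mx_segment in d_det sol.
split=> [|s]; first by rewrite d_det det_neq0_of_ker // => x; exact: one_sub_trans_mx_ker0.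
by have := sol _ (Pval_solves_trans_system seg_gp) (enum_rank s); rewrite mxE enum_rankK.
Qed.

End LinearSystem.

Section Separation.
Variables (R : realType) (S : finType) (E : rel S) (sfin sfail : S).
Hypothesis fin_neq_fail : sfin != sfail.
Hypothesis reach_fin : forall s, s != sfail -> connect E s sfin.
Local Notation gp := (graph_preserving E sfin sfail).
Local Notation separates val p := (Pval sfin sfail val p.1 != Pval sfin sfail val p.2).

Lemma separate_on_segment (vl0 vl1 : S -> S -> R) (L : seq (S * S)) : gp vl0 -> gp vl1 ->
  (forall p, p \in L -> separates vl0 p || separates vl1 p) ->
  exists2 t, 0 <= t <= 1 & forall p, p \in L -> separates (segment_val vl0 vl1 t) p.
Proof.
move=> gp0 gp1 sepL.
have [d [q rational]] := Pval_segment_rational fin_neq_fail reach_fin vl0 vl1.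
pose g (p : S * S) := q p.1 - q p.2.
have g_sep t p : 0 <= t <= 1 -> ((g p).[t] != 0) = separates (segment_val vl0 vl1 t) p.
  move=> t01; have [d_neq0 qt] := rational t (graph_preserving_segment gp0 gp1 t01).
  by rewrite hornerD hornerN -!qt -mulrBl mulf_eq0 negb_or d_neq0 andbT subr_eq0.
have poly_neq0 (r : {poly R}) t : r.[t] != 0 -> r != 0.
  by apply: contra_neq => ->; rewrite horner0.
have [|t t01 nroot] := @exists_nonroot_unit_interval _ (\prod_(p <- L) g p).
  rewrite prodf_seq_neq0; apply/allP => p /sepL /orP[sep0 | sep1].
    by apply: (poly_neq0 _ 0); rewrite g_sep ?lexx ?ler01 // segment_val0.
  by apply: (poly_neq0 _ 1); rewrite g_sep ?lexx ?ler01 // segment_val1.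
exists t => // p pL; rewrite -g_sep //.
by move: nroot; rewrite /root horner_prod prodf_seq_neq0 => /allP/(_ p pL).
Qed.

Lemma separating_valuation (L : seq (S * S)) : (exists val : S -> S -> R, gp val) ->
  (forall p, p \in L -> ~ mc_equiv R E sfin sfail p.1 p.2) ->
  exists2 val : S -> S -> R, gp val & forall p, p \in L -> separates val p.
Proof.
move=> [val0 gp0]; elim: L => [|p L IH] nequiv; first by exists val0.
have [vl0 gp_vl0 sepL] :
    exists2 vl0 : S -> S -> R, gp vl0 & forall p, p \in L -> separates vl0 p.
  by apply: IH => p' pL; apply: nequiv; rewrite inE pL orbT.
have [vl1 gp_vl1 sep_p] : exists2 vl1 : S -> S -> R, gp vl1 & separates vl1 p.
  have /existsNP[vl1 /not_implyP[gp_vl1 neq]] := nequiv p (mem_head p L).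
  by exists vl1 => //; exact/eqP.
have [|t t01 sept] := separate_on_segment (L := p :: L) gp_vl0 gp_vl1.
  by move=> p'; rewrite inE => /predU1P[-> | /sepL ->]; rewrite ?sep_p ?orbT.
by exists (segment_val vl0 vl1 t) => //; exact: graph_preserving_segment.
Qed.

End Separation.

Definition uniform_val (R : realType) (S : finType) (E : rel S) (s t : S) : R :=
  if E s t then #|[set t' | E s t']|%:R^-1 else 0.

Lemma uniform_val_graph_preserving (R : realType) (S : finType) (E : rel S) (sfin sfail : S) :
  (forall s, ~~ is_target sfin sfail s -> 0 < #|[set t | E s t]|)%N ->
  graph_preserving E sfin sfail (@uniform_val R S E).
Proof.
move=> succ s /succ succ_gt0; rewrite /uniform_val; split=> [t -> | t /negbTE -> //|].
  by rewrite invr_gt0 ltr0n.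
have card_succ : #|E s| = #|[set t | E s t]| by rewrite cardsE.
rewrite -big_mkcond /= sumr_const card_succ -[LHS]mulr_natr mulVf //.
by rewrite pnatr_eq0 -lt0n.
Qed.

Lemma reach_fin_of_fail_class (R : realType) (S : finType) (E : rel S) (sfin sfail : S) :
  sfin != sfail -> (forall u, mc_equiv R E sfin sfail u sfail -> u = sfail) ->
  forall s, s != sfail -> connect E s sfin.
Proof.
move=> fin_neq_fail fail_class s; apply: contraNT => nreach.
apply/eqP/fail_class => val val_gp.
rewrite (Pval_unreachable fin_neq_fail val_gp nreach) Pval_target //.
  by rewrite eq_sym (negbTE fin_neq_fail).
by rewrite /is_target eqxx orbT.
Qed.

Unset Implicit Arguments.

Theorem lemma20 (R : realType) (S : finType) (E : rel S) (sfin sfail : S) :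
  sfin != sfail ->
  (* targets have no outgoing edges *)
  (forall t, ~~ E sfin t) -> (forall t, ~~ E sfail t) ->
  (* no self-loops *)
  (forall s, ~~ E s s) ->
  (* every non-target state has exactly two successors *)
  (forall s, ~~ is_target sfin sfail s -> #|[set t | E s t]| = 2%N) ->
  (* the classes of fin and fail are singletons *)
  (forall u, @mc_equiv R S E sfin sfail u sfin -> u = sfin) ->
  (forall u, @mc_equiv R S E sfin sfail u sfail -> u = sfail) ->
  exists val : S -> S -> R,
    @graph_preserving R S E sfin sfail val /\
    forall u v, @Pval R S sfin sfail val u = @Pval R S sfin sfail val v <->
                @mc_equiv R S E sfin sfail u v.
Proof.
(* Only the class of fail matters, and two successors serve only to provide
   some graph-preserving valuation. *)
move=> fin_neq_fail _ _ _ two_succ _ fail_class.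
have reach_fin := reach_fin_of_fail_class fin_neq_fail fail_class.
pose L := [seq p <- enum {: S * S} | `[< ~ mc_equiv R E sfin sfail p.1 p.2 >]].
have gp_uniform : graph_preserving E sfin sfail (@uniform_val R S E).
  by apply: uniform_val_graph_preserving => s /two_succ ->.
have nequivL p : p \in L -> ~ mc_equiv R E sfin sfail p.1 p.2.
  by rewrite mem_filter => /andP[/asboolP].
have [val val_gp sepL] :=
  separating_valuation fin_neq_fail reach_fin (ex_intro _ _ gp_uniform) nequivL.
exists val; split=> // u v; split=> [Puv | equiv]; last exact: equiv.
apply: contrapT => nequiv.
have : (u, v) \in L by rewrite mem_filter mem_enum andbT; exact/asboolP.
by move/sepL; rewrite Puv eqxx.
Qed.
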